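(* For every $n$, $\partial_n^{\rm lb}\big(D_n^{\rm lb}(X,\rho)\big)\subset D_{n-1}^{\rm lb}(X,\rho)$; hence $D_*^{\rm lb}(X,\rho)=\{D_n^{\rm lb}(X,\rho),\partial_n^{\rm lb}\}_{n\in\mathbb Z}$ is a subchain complex of $C_*^{\rm lb}(X)$.
   Context: Let $p$ be an odd prime, $X=\mathbb Z_p$, and $[a,b,c]=a-b+c$ for $a,b,c\in X$. Let $\rho:X^2\to X^2$, $\rho((a,b))=(b,a)$. For pairs with the same first entry define $(a,b)\,\underline{\star}\,(a,c)=(c,[a,b,c])$ and $(a,b)\,\overline{\star}\,(a,c)=(c,[a,c,b])$. For $n\ge1$ let $C_n^{\rm lb}(X)$ be the free abelian group on all tuples $((a,b_1),\dots,(a,b_n))$ with $a,b_1,\dots,b_n\in X$, and $C_n^{\rm lb}(X)=0$ for $n\le0$. For $n\ge2$ define $\partial_n^{\rm lb}:C_n^{\rm lb}(X)\to C_{n-1}^{\rm lb}(X)$ by \[ \partial_n^{\rm lb}((a,b_1),\dots,(a,b_n))=\sum_{i=1}^n(-1)^i\Big\{((a,b_1),\dots,\widehat{(a,b_i)},\dots,(a,b_n)) - \big((a,b_1)\underline\star(a,b_i),\dots,(a,b_{i-1})\underline\star(a,b_i),(a,b_{i+1})\overline\star(a,b_i),\dots,(a,b_n)\overline\star(a,b_i)\big)\Big\}, \] i.e. the second tuple is $((b_i,[a,b_1,b_i]),\dots,(b_i,[a,b_{i-1},b_i]),(b_i,[a,b_i,b_{i+1}]),\dots,(b_i,[a,b_i,b_n]))$;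 and $\partial_n^{\rm lb}=0$ for $n\le1$. This makes $C_*^{\rm lb}(X)$ a chain complex. Let $D_n^{\rm lb}(X,\rho)\subset C_n^{\rm lb}(X)$ be the subgroup generated by all elements \[ ((a,b_1),\dots,(a,b_n))+\big((a,b_1)\underline\star(a,b_i),\dots,(a,b_{i-1})\underline\star(a,b_i),\ \rho((a,b_i)),\ (a,b_{i+1})\overline\star(a,b_i),\dots,(a,b_n)\overline\star(a,b_i)\big) \] for $a,b_1,\dots,b_n\in X$ and $i\in\{1,\dots,n\}$. *)

From HB Require Import structures.
From mathcomp Require Import all_boot all_order all_algebra.
Set Implicit Arguments. Unset Strict Implicit. Unset Printing Implicit Defensive.
Import Order.TTheory GRing.Theory Num.Theory.
Local Open Scope ring_scope.

(* X = 'Z_p.  A generator ((a,b_1),...,(a,b_n)) of C_n^lb(X) is encoded by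
   the pair (a, b) with b : {ffun 'I_n -> 'Z_p}, b i = b_{i+1} (0-indexed). *)
Definition lbgen (p n : nat) := ('Z_p * {ffun 'I_n -> 'Z_p})%type.

(* C_n^lb(X): free abelian group on the (finite) set of generators,
   i.e. integer-valued functions on generators. *)
Definition lbchain (p n : nat) := {ffun lbgen p n -> int}.

Definition lbbasis (p n : nat) (g : lbgen p n) : lbchain p n :=
  [ffun h => ((h == g) : nat)%:R].

Definition tern (p : nat) (a b c : 'Z_p) : 'Z_p := a - b + c.

(* boundary of a generator in degree m.+1; the index i : 'I_(m.+1) is
   0-indexed, so the paper's index is i+1 and its sign (-1)^(i+1).
   lift i j skips position i (deletion of the i-th entry). *)
Definition lbbound_gen (p m : nat) (g : lbgen p m.+1) : lbchain p m :=
  let: (a, b) := g in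
  \sum_(i < m.+1)
      (lbbasis (a, [ffun j : 'I_m => b (lift i j)])
       - lbbasis (b i, [ffun j : 'I_m =>
                          let k := lift i j in
                          if (k < i)%N then tern a (b k) (b i)
                          else tern a (b i) (b k)])) *~ ((-1) ^+ i.+1 : int).

(* the boundary map d_{m+1} : C_{m+1} -> C_m, extended Z-linearly;
   d_1 = 0 as in the paper. *)
Definition lbbound (p m : nat) (x : lbchain p m.+1) : lbchain p m :=
  if m is 0 then 0 else \sum_(g : lbgen p m.+1) lbbound_gen g *~ x g.

Definition lbDgen (p n : nat) (g : lbgen p n) (i : 'I_n) : lbchain p n :=
  let: (a, b) := g in
  lbbasis g + lbbasis (b i, [ffun j : 'I_n =>
                               if (j < i)%N then tern a (b j) (b i)
                               else if j == i then a
                               else tern a (b i) (b j)]).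

Definition inD (p n : nat) (x : lbchain p n) : Prop :=
  exists c : {ffun lbgen p n * 'I_n -> int},
    x = \sum_(gi : lbgen p n * 'I_n) lbDgen gi.1 gi.2 *~ c gi.

From HB Require Import structures.
From mathcomp Require Import all_boot all_order all_algebra.
From mathcomp Require Import ring zify.
Set Implicit Arguments. Unset Strict Implicit. Unset Printing Implicit Defensive.
Import GRing.Theory.
Local Open Scope ring_scope.

(* The k-th term of the boundary of a generator g is built from two faces of g:
   deleting the k-th entry, and starring every other entry by the k-th one.
   Let rho_i g be the second half of the D-generator g + rho_i g.  For k <> i the
   k-th faces of rho_i g are the rho-images (at the shifted index) of the k-th
   faces of g, so the k-th term of d(g + rho_i g) is again a D-generator; for
   k = i the two faces of g and of rho_i g are exchanged and the terms cancel. *)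

Section LbBoundary.
Variable p : nat.

Definition lbdel m (k : 'I_m.+1) (g : lbgen p m.+1) : lbgen p m :=
  let: (a, b) := g in (a, [ffun j : 'I_m => b (lift k j)]).

Definition lbstar m (k : 'I_m.+1) (g : lbgen p m.+1) : lbgen p m :=
  let: (a, b) := g in
  (b k, [ffun j : 'I_m => let t := lift k j in
                          if (t < k)%N then tern a (b t) (b k)
                          else tern a (b k) (b t)]).

Definition lbrho n (g : lbgen p n) (i : 'I_n) : lbgen p n :=
  let: (a, b) := g in
  (b i, [ffun j : 'I_n => if (j < i)%N then tern a (b j) (b i)
                          else if j == i then a
                          else tern a (b i) (b j)]).

Lemma lbbound_genE m (g : lbgen p m.+1) :
  lbbound_gen g =
  \sum_(k < m.+1) (lbbasis (lbdel k g) - lbbasis (lbstar k g)) *~ ((-1) ^+ k.+1).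
Proof. by case: g. Qed.

Lemma lbDgenE n (g : lbgen p n) i : lbDgen g i = lbbasis g + lbbasis (lbrho g i).
Proof. by case: g. Qed.

Lemma ltn_lift n (k : 'I_n.+1) (l j : 'I_n) : (lift k l < lift k j)%N = (l < j)%N.
Proof. rewrite /= /bump; case: (leqP k l); case: (leqP k j); lia. Qed.

Lemma lbdel_rho_diag m (g : lbgen p m.+1) i : lbdel i (lbrho g i) = lbstar i g.
Proof.
case: g => a b /=; congr pair; apply/ffunP => l; rewrite !ffunE.
by rewrite eq_sym (negbTE (neq_lift i l)).
Qed.

Lemma lbstar_rho_diag m (g : lbgen p m.+1) i : lbstar i (lbrho g i) = lbdel i g.
Proof.
case: g => a b /=; rewrite !ffunE ltnn eqxx; congr pair; apply/ffunP => l.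
rewrite !ffunE -/(nat_of_ord (lift i l)) eq_sym (negbTE (neq_lift i l)).
by case: ifP => ->; rewrite /tern; ring.
Qed.

Lemma lbdel_rho m (g : lbgen p m.+1) (k : 'I_m.+1) (j : 'I_m) :
  lbdel k (lbrho g (lift k j)) = lbrho (lbdel k g) j.
Proof.
case: g => a b /=; rewrite !ffunE; congr pair; apply/ffunP => l.
by rewrite !ffunE -(ltn_lift k) (inj_eq lift_inj).
Qed.

Lemma lbstar_rho m (g : lbgen p m.+1) (k : 'I_m.+1) (j : 'I_m) :
  lbstar k (lbrho g (lift k j)) = lbrho (lbstar k g) j.
Proof.
case: g => a b /=; rewrite !ffunE (negbTE (neq_lift k j)).
have bump_neq (t : 'I_m) : bump k t <> k.
  by move=> e; move: (neq_lift k t); rewrite -val_eqE /= e eqxx.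
have bump_kj := bump_neq j; congr pair; rewrite /tern.
  by case: (ltngtP (bump k j) k); intros; first [ring | lia].
apply/ffunP => l; rewrite !ffunE -(ltn_lift k) (inj_eq lift_inj).
have bump_kl := bump_neq l.
case: (eqVneq l j) => [-> | neq_lj].
  by rewrite ltnn; case: (ltngtP (bump k j) k); intros; first [ring | lia].
have {}neq_lj : bump k l <> bump k j.
  by move=> e; case/eqP: neq_lj; apply: (@lift_inj _ k); apply: val_inj.
case: (ltngtP (bump k l) k); case: (ltngtP (bump k j) k);
  case: (ltngtP (bump k l) (bump k j)); intros; first [ring | lia].
Qed.

Lemma inD0 n : inD (0 : lbchain p n).
Proof. by exists 0; rewrite big1 // => gi _; rewrite ffunE mulr0z. Qed.

Lemma inDD n (x y : lbchain p n) : inD x -> inD y -> inD (x + y).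
Proof.
case=> c -> [d ->]; exists (c + d); rewrite -big_split.
by apply: eq_bigr => gi _; rewrite ffunE mulrzDr.
Qed.

Lemma inDZ n (x : lbchain p n) z : inD x -> inD (x *~ z).
Proof.
case=> c ->; exists [ffun gi => c gi * z]; rewrite mulrz_suml.
by apply: eq_bigr => gi _; rewrite ffunE mulrzA.
Qed.

Lemma inDN n (x : lbchain p n) : inD x -> inD (- x).
Proof. by rewrite -mulrN1z; apply: inDZ. Qed.

Lemma inD_sum n (I : finType) (F : I -> lbchain p n) :
  (forall i, inD (F i)) -> inD (\sum_i F i).
Proof. by move=> DF; apply: big_ind => //; [apply: inD0 | apply: inDD]. Qed.

Lemma inD_lbDgen n (g : lbgen p n) i : inD (lbDgen g i).
Proof.
exists [ffun gi => ((gi == (g, i)) : nat)%:Z].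
rewrite (bigD1 (g, i)) //= big1 ?addr0 ?ffunE ?eqxx ?mulr1z //.
by move=> gi /negbTE gi_neq; rewrite ffunE gi_neq mulr0z.
Qed.

Lemma inD_lbbound_gen_rho m (g : lbgen p m.+1) i :
  inD (lbbound_gen g + lbbound_gen (lbrho g i)).
Proof.
rewrite !lbbound_genE -big_split /=; apply: inD_sum => k.
rewrite -mulrzDl; apply: inDZ.
case: (unliftP k i) => [j -> | ->].
  rewrite lbdel_rho lbstar_rho.
  have -> : forall u v u' v' : lbchain p m,
      (u - v) + (u' - v') = (u + u') - (v + v') by move=> *; rewrite opprD addrACA.
  by rewrite -!lbDgenE; apply: inDD; [|apply: inDN]; apply: inD_lbDgen.
rewrite lbdel_rho_diag lbstar_rho_diag addrC subrKA subrr.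
exact: inD0.
Qed.

Lemma lbbound_sumZ m (I : finType) (F : I -> lbchain p m.+1) (c : I -> int) :
  lbbound (\sum_i F i *~ c i) = \sum_i lbbound (F i) *~ c i.
Proof.
rewrite /lbbound; case: m F => [|m] F.
  by rewrite big1 // => i _; rewrite mul0rz.
under eq_bigr do rewrite sum_ffunE mulrz_sumr.
rewrite exchange_big /=; apply: eq_bigr => i _.
rewrite mulrz_suml; apply: eq_bigr => g _.
by rewrite ffunMzE -mulrzA mulrzz.
Qed.

Lemma sum_lbbasis n (V : zmodType) (F : lbgen p n -> V) g :
  \sum_h F h *~ lbbasis g h = F g.
Proof.
rewrite (bigD1 g) //= big1 ?addr0 ?ffunE ?eqxx ?mulr1z //.
by move=> h /negbTE h_neq; rewrite ffunE h_neq mulr0z.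
Qed.

Lemma lbbound_lbDgen m (g : lbgen p m.+2) i :
  lbbound (lbDgen g i) = lbbound_gen g + lbbound_gen (lbrho g i).
Proof.
rewrite /lbbound lbDgenE.
under eq_bigr do rewrite ffunE mulrzDr.
by rewrite big_split !sum_lbbasis.
Qed.

End LbBoundary.

Theorem lemma3p1 (p : nat) (hp : prime p) (hodd : odd p) (m : nat)
    (x : lbchain p m.+1) :
  inD x -> inD (lbbound x).
Proof.
case: m x => [|m] x; first by move=> _; apply: inD0.
case=> c ->; rewrite lbbound_sumZ; apply: inD_sum => gi; apply: inDZ.
by rewrite lbbound_lbDgen; apply: inD_lbbound_gen_rho.
Qed.
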